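(* Let $A,B:\mathbb{N}\to\mathbb{R}$ be functions with $\sum_{m\mid n} A(m) = B(n)$ for all $n\in\mathbb{N}$, and let $r,s$ be reals with $s\le\min\{0,r\}$. Then for every $n\in\mathbb{N}$: (i) $\sum_{m\mid n} \frac{m^s}{\varphi(m)^r} A(m) = \sum_{k\mid n} g^{r,s}_{k,n/k} B(k)$. (ii) If $\alpha,\beta:\mathbb{N}\to\mathbb{R}_{>0}$ satisfy $\beta(N)=\sum_{m\mid N}\alpha(m)$ for all $N\in\mathbb{N}$, and $B(k)\ge\beta(k)$ for all positive divisors $k$ of $n$, then $\sum_{m\mid n} \frac{m^s}{\varphi(m)^r}A(m) \ge \sum_{m\mid n}\frac{m^s}{\varphi(m)^r}\alpha(m)$, with equality if and only if $B(k)=\beta(k)$ for every positive divisor $k$ of $n$ such that $g^{r,s}_{k,n/k}\ne 0$.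
   Context: $\mu$ is the Möbius function, $\varphi$ is Euler's totient function, and for positive integers $m,j$, $g^{r,s}_{m,j} := \sum_{i\mid j} \frac{\mu(i)\,(mi)^s}{\varphi(mi)^r}$. $\mathbb{N}=\{1,2,3,\dots\}$. *)

From Stdlib Require Import Reals.
From mathcomp Require Import all_boot.

Set Implicit Arguments.
Unset Strict Implicit.
Unset Printing Implicit Defensive.

Local Open Scope R_scope.

Definition sumdiv (n : nat) (F : nat -> R) : R :=
  \big[Rplus/0]_(d <- divisors n) F d.

(* Moebius function: 0 at 0 (unused), (-1)^(#primes) if n is squarefree,
   0 otherwise. *)
Definition mobius (n : nat) : R :=
  if n == 0%N then 0
  else if all (fun p => logn p n == 1%N) (primes n)
       then (-1) ^ (size (primes n)) else 0.

Definition wt (r s : R) (m : nat) : R :=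
  Rpower (INR m) s / Rpower (INR (totient m)) r.

Definition gfun (r s : R) (m j : nat) : R :=
  sumdiv j (fun i => mobius i * wt r s (m * i)).

From HB Require Import structures.
From Stdlib Require Import Reals Lra.
From mathcomp Require Import all_boot.

Set Implicit Arguments.
Unset Strict Implicit.
Unset Printing Implicit Defensive.

Open Scope R_scope.

(* Since B = 1 * A, Moebius inversion and resummation over m = k i turn the
   weighted sum of A into sum_(k | n) g_(k, n/k) B(k), which is part (i).
   For j = p^a j' with p a prime not dividing j', the Moebius sum defining g
   collapses to g_(m, j) = (1 - p^s / c^r) g_(m, j'), where c = phi(m p) / phi(m)
   is p or p - 1; as s <= min(0, r) this factor is nonnegative, so g >= 0.
   Part (ii) is part (i) applied to A - alpha and B - beta: the gap between the
   two weighted sums is the sum of the nonnegative terms g_(k, n/k) (B(k) - beta(k)). *)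

Lemma RplusA : associative Rplus.
Proof. by move=> x y z; rewrite Rplus_assoc. Qed.

HB.instance Definition _ :=
  Monoid.isComLaw.Build R 0 Rplus RplusA Rplus_comm Rplus_0_l.
HB.instance Definition _ := Monoid.isMulLaw.Build R 0 Rmult Rmult_0_l Rmult_0_r.
HB.instance Definition _ :=
  Monoid.isAddLaw.Build R Rmult Rplus Rmult_plus_distr_r Rmult_plus_distr_l.

Section RealSums.
Variable I : Type.
Implicit Types (s : seq I) (P : pred I) (F G : I -> R).

Lemma sumR_sub s P F G :
  \big[Rplus/0]_(i <- s | P i) (F i - G i)
  = \big[Rplus/0]_(i <- s | P i) F i - \big[Rplus/0]_(i <- s | P i) G i.
Proof.
by rewrite /Rminus big_split (big_morph Ropp Ropp_plus_distr Ropp_0).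
Qed.

Lemma sumR_ge0 s P F : (forall i, P i -> 0 <= F i) ->
  0 <= \big[Rplus/0]_(i <- s | P i) F i.
Proof. by move=> F_ge0; apply: big_ind => // [|x y]; lra. Qed.

End RealSums.

Lemma psumR_eq0 (I : eqType) (s : seq I) (F : I -> R) :
  (forall i, i \in s -> 0 <= F i) ->
  \big[Rplus/0]_(i <- s) F i = 0 <-> (forall i, i \in s -> F i = 0).
Proof.
move=> F_ge0; split=> [|F0]; last by rewrite big1_seq // => i /andP[_ /F0].
elim: s F_ge0 => [|a s IHs] // F_ge0; rewrite big_cons => sum0.
have Fa_ge0 := F_ge0 a (mem_head a s).
have sum_ge0 : 0 <= \big[Rplus/0]_(i <- s) F i.
  by rewrite big_seq; apply: sumR_ge0 => i si; apply: F_ge0; rewrite inE si orbT.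
move=> i; rewrite inE => /orP[/eqP -> | si]; first lra.
apply: IHs si => [j sj|]; last lra.
by apply: F_ge0; rewrite inE sj orbT.
Qed.

Section DivisorSums.
Implicit Types (n m d : nat) (F G : nat -> R).

Lemma eq_sumdiv n F G : (0 < n)%N ->
  (forall d, (d %| n)%N -> F d = G d) -> sumdiv n F = sumdiv n G.
Proof.
move=> n_gt0 eqFG; rewrite /sumdiv big_seq [RHS]big_seq.
by apply: eq_bigr => d; rewrite -dvdn_divisors //; apply: eqFG.
Qed.

Lemma sumdiv_div n F : (0 < n)%N ->
  sumdiv n (fun d => F (n %/ d)%N) = sumdiv n F.
Proof.
move=> n_gt0; rewrite /sumdiv -(big_map (divn n) xpredT F).
have divnK' d : (d %| n)%N -> (n %/ (n %/ d))%N = d by move=> ?; rewrite divnA // mulKn.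
apply/perm_big/uniq_perm; last 1 first.
- move=> e; rewrite -dvdn_divisors //; apply/mapP/idP => [[d] | dvd_en].
    by rewrite -dvdn_divisors // => dvd_dn ->; apply: dvdn_div.
  by exists (n %/ e)%N; rewrite ?divnK' // -dvdn_divisors ?dvdn_div.
- rewrite map_inj_in_uniq ?divisors_uniq // => d e.
  rewrite -!dvdn_divisors // => dvd_dn dvd_en eq_div.
  by rewrite -(divnK' d dvd_dn) eq_div divnK'.
- exact: divisors_uniq.
Qed.

Lemma sumdiv_dvd_sub n m G : (0 < n)%N -> (m %| n)%N ->
  sumdiv m G = \big[Rplus/0]_(d <- divisors n | (d %| m)%N) G d.
Proof.
move=> n_gt0 dvd_mn; have m_gt0 := dvdn_gt0 n_gt0 dvd_mn.
rewrite /sumdiv -[RHS]big_filter; apply/perm_big/uniq_perm.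
- exact: divisors_uniq.
- by rewrite filter_uniq // divisors_uniq.
- move=> d; rewrite mem_filter -!dvdn_divisors //.
  by apply/idP/andP => [dvd_dm | []//]; split=> //; apply: dvdn_trans dvd_mn.
Qed.

Lemma sumdiv_dvd_mul n d G : (0 < n)%N -> (d %| n)%N ->
  \big[Rplus/0]_(m <- divisors n | (d %| m)%N) G m
  = sumdiv (n %/ d) (fun t => G (d * t)%N).
Proof.
move=> n_gt0 dvd_dn; have d_gt0 := dvdn_gt0 n_gt0 dvd_dn.
have q_gt0 : (0 < n %/ d)%N by rewrite divn_gt0 // dvdn_leq.
rewrite /sumdiv -big_filter -(big_map (muln d) xpredT G).
apply/perm_big/uniq_perm.
- by rewrite filter_uniq // divisors_uniq.
- rewrite map_inj_uniq ?divisors_uniq // => x y /eqP.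
  by rewrite eqn_pmul2l // => /eqP.
- move=> m; rewrite mem_filter -dvdn_divisors //; apply/andP/mapP.
  + move=> [dvd_dm dvd_mn]; exists (m %/ d)%N; last by rewrite mulnC divnK.
    by rewrite -dvdn_divisors // dvdn_divRL // divnK.
  + move=> [t]; rewrite -dvdn_divisors // dvdn_divRL // => dvd_tdn ->.
    by rewrite dvdn_mulr // mulnC.
Qed.

Lemma sumdiv_pairs n (H : nat -> nat -> R) : (0 < n)%N ->
  sumdiv n (fun d => sumdiv (n %/ d) (H d))
  = sumdiv n (fun m => sumdiv m (fun d => H d (m %/ d)%N)).
Proof.
move=> n_gt0.
rewrite [RHS](eq_sumdiv n_gt0 (fun m dvd_mn => sumdiv_dvd_sub _ n_gt0 dvd_mn)).
rewrite /sumdiv (exchange_big_dep xpredT) //= -/(sumdiv _ _).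
apply: eq_sumdiv => // d dvd_dn; rewrite sumdiv_dvd_mul //.
have d_gt0 := dvdn_gt0 n_gt0 dvd_dn.
by apply: eq_sumdiv => [|t _]; rewrite ?mulKn // divn_gt0 // dvdn_leq.
Qed.

End DivisorSums.

Lemma logn_pfactorM p k i : prime p -> (0 < i)%N -> coprime p i ->
  logn p (p ^ k * i) = k.
Proof.
move=> p_pr i_gt0 p_i; have p_gt0 := prime_gt0 p_pr.
by rewrite lognM ?expn_gt0 ?p_gt0 // pfactorK // logn_coprime // addn0.
Qed.

Lemma pdiv_factor n : (1 < n)%N ->
  exists p a j, [/\ prime p, (0 < a)%N, coprime p j, (0 < j < n)%N & n = p ^ a * j]%N.
Proof.
move=> n_gt1; have n_gt0 := ltnW n_gt1; set p := pdiv n.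
have p_pr : prime p := pdiv_prime n_gt1.
have [j p_j n_eq] := pfactor_coprime p_pr n_gt0.
have a_gt0 : (0 < logn p n)%N by rewrite logn_gt0 mem_primes p_pr n_gt0 pdiv_dvd.
have j_gt0 : (0 < j)%N by move: n_gt0; rewrite n_eq muln_gt0 => /andP[].
exists p, (logn p n), j; split=> //; last by rewrite mulnC.
rewrite j_gt0 {1}n_eq mulnC ltn_Pmull //.
by rewrite -(expn0 p) ltn_exp2l ?prime_gt1.
Qed.

Lemma mobius1 : mobius 1 = 1.
Proof. by []. Qed.

Lemma mobius_logn_gt1 p d : prime p -> (1 < logn p d)%N -> mobius d = 0.
Proof.
move=> p_pr logn_gt1; rewrite /mobius; case: eqP => // /eqP d_neq0.
case: ifP => // /allP logn_eq1.
have : p \in primes d by rewrite -logn_gt0 ltnW.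
by move=> /logn_eq1 /eqP logn1; rewrite logn1 in logn_gt1.
Qed.

Lemma mobius_mulp p i : prime p -> (0 < i)%N -> coprime p i ->
  mobius (p * i) = - mobius i.
Proof.
move=> p_pr i_gt0 p_i; have p_gt0 := prime_gt0 p_pr.
have p_ndvd_i : ~~ (p %| i)%N by rewrite -prime_coprime.
have primes_pi : perm_eq (primes (p * i)) (p :: primes i).
  apply: uniq_perm; first exact: primes_uniq.
    by rewrite /= primes_uniq andbT mem_primes (negbTE p_ndvd_i) !andbF.
  by move=> q; rewrite in_cons primesM // primes_prime // mem_seq1.
rewrite /mobius muln_eq0 !eqn0Ngt i_gt0 p_gt0 /=.
rewrite (perm_all _ primes_pi) (perm_size primes_pi) /=.
have -> : logn p (p * i) = 1%N by rewrite -{2}(expn1 p) logn_pfactorM.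
rewrite /= (@eq_in_all _ _ (fun q => logn q i == 1)%N).
  by case: ifP => _ /=; lra.
move=> q; rewrite mem_primes => /and3P[q_pr _ q_dvd_i].
rewrite lognM // logn_prime //; case: (eqVneq q p) => [q_eq_p | //].
by rewrite -q_eq_p q_dvd_i in p_ndvd_i.
Qed.

Lemma sumdiv_pfactorM G p a j : prime p -> (0 < j)%N -> coprime p j ->
  sumdiv (p ^ a * j) G
  = \big[Rplus/0]_(0 <= k < a.+1) sumdiv j (fun i => G (p ^ k * i)%N).
Proof.
move=> p_pr j_gt0 p_j; have p_gt1 := prime_gt1 p_pr.
have n_gt0 : (0 < p ^ a * j)%N by rewrite muln_gt0 expn_gt0 ltnW.
rewrite /sumdiv -(big_allpairs_dep (h := fun k i => p ^ k * i)%N); apply/perm_big.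
apply: uniq_perm; first exact: divisors_uniq.
  apply: allpairs_uniq; rewrite ?iota_uniq ?divisors_uniq //.
  move=> _ _ /allpairsP[[k i] [_ i_j ->]] /allpairsP[[k' i'] [_ i'_j ->]] /=.
  move: i_j i'_j; rewrite -!dvdn_divisors // => i_j i'_j eq_ki.
  have [i_gt0 i'_gt0] := (dvdn_gt0 j_gt0 i_j, dvdn_gt0 j_gt0 i'_j).
  have [p_i p_i'] := (coprime_dvdr i_j p_j, coprime_dvdr i'_j p_j).
  have eq_k : k = k' by rewrite -(logn_pfactorM k p_pr i_gt0 p_i) eq_ki logn_pfactorM.
  move: eq_ki; rewrite eq_k => /eqP.
  by rewrite eqn_pmul2l ?expn_gt0 ?(ltnW p_gt1) // => /eqP ->.
move=> d; rewrite -dvdn_divisors //.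
apply/idP/allpairsP => [dvd_dn | [[k i] [/=]]]; last first.
  rewrite mem_index_iota ltnS -dvdn_divisors // => k_le_a i_j ->.
  by rewrite dvdn_mul ?dvdn_exp2l.
have [e p_e d_eq] := pfactor_coprime p_pr (dvdn_gt0 n_gt0 dvd_dn).
exists (logn p d, e); rewrite /= mem_index_iota ltnS -dvdn_divisors // mulnC -d_eq.
split=> //.
  have pk_dvd_n : (p ^ logn p d %| p ^ a * j)%N.
    by rewrite (dvdn_trans _ dvd_dn) // pfactor_dvdnn.
  by rewrite leq0n -(dvdn_Pexp2l _ _ p_gt1) -(Gauss_dvdl _ (coprimeXl _ p_j)).
have e_dvd_n : (e %| p ^ a * j)%N by rewrite (dvdn_trans _ dvd_dn) // d_eq dvdn_mulr.
by rewrite -(@Gauss_dvdr e (p ^ a) j) // coprime_sym coprimeXl.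
Qed.


Lemma sumdiv_mobius_pfactorM F p a j :
  prime p -> (0 < a)%N -> (0 < j)%N -> coprime p j ->
  sumdiv (p ^ a * j) (fun i => mobius i * F i)
  = sumdiv j (fun i => mobius i * (F i - F (p * i)%N)).
Proof.
move=> p_pr a_gt0 j_gt0 p_j; rewrite sumdiv_pfactorM // big_ltn // big_ltn //.
rewrite big1_seq => [|k /andP[_]]; last first.
  rewrite mem_index_iota => /andP[k_gt1 _]; apply: big1_seq => i.
  rewrite -dvdn_divisors // => i_j; have i_gt0 := dvdn_gt0 j_gt0 i_j.
  by rewrite (@mobius_logn_gt1 p) ?Rmult_0_l // logn_pfactorM // (coprime_dvdr i_j).
rewrite Rplus_0_r /sumdiv -big_split; apply: eq_sumdiv => // i i_j.
have i_gt0 := dvdn_gt0 j_gt0 i_j.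
by rewrite expn0 mul1n expn1 mobius_mulp // ?(coprime_dvdr i_j) //=; ring.
Qed.

Lemma sumdiv_mobius n : (0 < n)%N -> sumdiv n mobius = if n == 1%N then 1 else 0.
Proof.
case: (ltngtP n 1) => [|n_gt1 _|-> _]; [by case: n | | by rewrite /sumdiv big_seq1].
have [p [a [j [p_pr a_gt0 p_j /andP[j_gt0 _] n_eq]]]] := pdiv_factor n_gt1.
transitivity (sumdiv n (fun i => mobius i * 1)).
  by apply: eq_sumdiv => [|d _]; [exact: ltnW | ring].
rewrite n_eq sumdiv_mobius_pfactorM // /sumdiv big1 // => i _; ring.
Qed.

Lemma sumdiv_mobius_conv (f : nat -> R) N : (0 < N)%N ->
  sumdiv N (fun t => sumdiv (N %/ t) (fun i => mobius i * f (t * i)%N)) = f 1%N.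
Proof.
move=> N_gt0; rewrite sumdiv_pairs //.
transitivity (sumdiv N (fun u => f u * if u == 1%N then 1 else 0)).
  apply: eq_sumdiv => // u u_N; have u_gt0 := dvdn_gt0 N_gt0 u_N.
  rewrite -sumdiv_mobius // -(sumdiv_div mobius u_gt0) /sumdiv big_distrr.
  by apply: eq_sumdiv => // t t_u; rewrite /= (mulnC t) divnK // Rmult_comm.
rewrite /sumdiv (bigD1_seq 1%N) ?divisor1 ?divisors_uniq //= big1 => [|u /negbTE ->].
  by rewrite Rmult_1_r Rplus_0_r.
by rewrite Rmult_0_r.
Qed.

Lemma totient_mulp x p : prime p -> (0 < x)%N ->
  totient (x * p) = (totient x * (if p %| x then p else p.-1))%N.
Proof.
move=> p_pr x_gt0; have [y p_y x_eq] := pfactor_coprime p_pr x_gt0.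
move: (logn p x) x_eq => e ->; rewrite -mulnA -expnSr.
have y_pk k : coprime y (p ^ k) by rewrite coprime_sym coprimeXl.
rewrite !totient_coprime // totient_pfactor //.
case: e => [|e].
  have p_ndvd_y : ~~ (p %| y)%N by rewrite -prime_coprime.
  by rewrite !expn0 !muln1 (negbTE p_ndvd_y).
rewrite totient_pfactor // dvdn_mull ?(dvdn_exp2l p (_ : 1 <= e.+1)%N) //.
by rewrite expnSr !mulnA.
Qed.

Lemma Rpower_gt0 x y : 0 < Rpower x y.
Proof. exact: exp_pos. Qed.

Lemma wt_gt0 r s m : 0 < wt r s m.
Proof. exact: Rdiv_lt_0_compat (Rpower_gt0 _ _) (Rpower_gt0 _ _). Qed.

Lemma wt_mulp r s x p : prime p -> (0 < x)%N ->
  wt r s (x * p) = wt r s x *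
    (Rpower (INR p) s / Rpower (INR (if p %| x then p else p.-1)) r).
Proof.
move=> p_pr x_gt0; rewrite /wt totient_mulp // !mult_INR.
set c := (if _ then _ else _)%N.
have INR_gt0 k : (0 < k)%N -> 0 < INR k by move=> k_gt0; apply/lt_0_INR/ltP.
have [Rx_gt0 Rp_gt0 Rt_gt0 Rc_gt0] :
    [/\ 0 < INR x, 0 < INR p, 0 < INR (totient x) & 0 < INR c].
  split; apply: INR_gt0; rewrite ?totient_gt0 //; try exact: prime_gt0.
  by rewrite /c; case: ifP => _; rewrite ?ltn_predRL ?prime_gt1 ?prime_gt0.
rewrite -!Rpower_mult_distr //.
by field; split; apply: Rgt_not_eq; apply: Rpower_gt0.
Qed.

Lemma Rpower_ratio_le1 r s (p c : nat) : s <= Rmin 0 r -> (0 < c <= p)%N ->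
  Rpower (INR p) s / Rpower (INR c) r <= 1.
Proof.
move=> s_le /andP[c_gt0 c_le_p].
have s_le0 : s <= 0 := Rle_trans _ _ _ s_le (Rmin_l 0 r).
have s_le_r : s <= r := Rle_trans _ _ _ s_le (Rmin_r 0 r).
have c_ge1 : 1 <= INR c by apply: (le_INR 1); apply/leP.
have p_ge_c : INR c <= INR p by apply/le_INR/leP.
have ps_le_cs : Rpower (INR p) s <= Rpower (INR c) s.
  have Rpower_s x : Rpower x s = / Rpower x (- s).
    by rewrite -Rpower_Ropp Ropp_involutive.
  rewrite !Rpower_s; apply: Rinv_le_contravar; first exact: Rpower_gt0.
  by apply: Rle_Rpower_l; lra.
have cs_le_cr : Rpower (INR c) s <= Rpower (INR c) r by apply: Rle_Rpower.
have cr_gt0 := Rpower_gt0 (INR c) r.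
apply: (Rmult_le_reg_r _ _ _ cr_gt0); rewrite Rmult_1_l /Rdiv Rmult_assoc Rinv_l; lra.
Qed.

Lemma gfun_pfactorM r s m p a j :
  prime p -> (0 < a)%N -> (0 < m)%N -> (0 < j)%N -> coprime p j ->
  gfun r s m (p ^ a * j) = (1 - Rpower (INR p) s
    / Rpower (INR (if p %| m then p else p.-1)) r) * gfun r s m j.
Proof.
move=> p_pr a_gt0 m_gt0 j_gt0 p_j.
rewrite /gfun sumdiv_mobius_pfactorM // /sumdiv big_distrr; apply: eq_sumdiv => // i i_j.
have i_gt0 := dvdn_gt0 j_gt0 i_j.
have p_ndvd_i : ~~ (p %| i)%N by rewrite -prime_coprime // (coprime_dvdr i_j p_j).
rewrite /= mulnCA (mulnC p) (@wt_mulp r s (m * i) p) ?muln_gt0 ?m_gt0 //.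
by rewrite Euclid_dvdM // (negbTE p_ndvd_i) orbF; ring.
Qed.

Lemma gfun_ge0 r s m j : s <= Rmin 0 r -> (0 < m)%N -> (0 < j)%N -> 0 <= gfun r s m j.
Proof.
move=> s_le m_gt0; elim/ltn_ind: j => j IHj j_gt0.
case: (ltngtP j 1) => [|j_gt1|->]; first by case: j j_gt0 {IHj}.
  have [p [a [j' [p_pr a_gt0 p_j' /andP[j'_gt0 j'_lt_j] ->]]]] := pdiv_factor j_gt1.
  rewrite gfun_pfactorM //; apply: Rmult_le_pos; last exact: IHj.
  suff : Rpower (INR p) s / Rpower (INR (if p %| m then p else p.-1)) r <= 1 by lra.
  apply: Rpower_ratio_le1 => //.
  case: ifP => _; rewrite ?leqnn ?leq_pred andbT; first exact: prime_gt0.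
  by rewrite ltn_predRL prime_gt1.
rewrite /gfun /sumdiv big_seq1 mobius1 muln1 Rmult_1_l; exact/Rlt_le/wt_gt0.
Qed.

Lemma sumdiv_gfun r s n d : (0 < n)%N -> (d %| n)%N ->
  sumdiv (n %/ d) (fun t => gfun r s (d * t) (n %/ (d * t))) = wt r s d.
Proof.
move=> n_gt0 d_n; have d_gt0 := dvdn_gt0 n_gt0 d_n.
have q_gt0 : (0 < n %/ d)%N by rewrite divn_gt0 // dvdn_leq.
rewrite -[in RHS](muln1 d) -(sumdiv_mobius_conv (fun u => wt r s (d * u)) q_gt0).
apply: eq_sumdiv => // t _; rewrite /gfun divnMA.
by apply: eq_bigr => i _; rewrite mulnA.
Qed.

Lemma sumdiv_wt_gfun r s (A B : nat -> R) n :
  (forall N, (0 < N)%N -> sumdiv N A = B N) -> (0 < n)%N ->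
  sumdiv n (fun m => wt r s m * A m)
  = sumdiv n (fun k => gfun r s k (n %/ k) * B k).
Proof.
move=> sumA n_gt0.
pose H d t := gfun r s (d * t) (n %/ (d * t)) * A d.
transitivity (sumdiv n (fun d => sumdiv (n %/ d) (H d))).
  apply: eq_sumdiv => // d d_n.
  by rewrite /H /sumdiv -big_distrl /= -/(sumdiv _ _) sumdiv_gfun // Rmult_comm.
rewrite sumdiv_pairs //; apply: eq_sumdiv => // k k_n.
have k_gt0 := dvdn_gt0 n_gt0 k_n.
rewrite -sumA // /sumdiv big_distrr; apply: eq_sumdiv => // d d_k.
by rewrite /H /= mulnC divnK.
Qed.

Lemma sumdiv_wt_sub r s (A B alpha beta : nat -> R) n :
  (forall N, (0 < N)%N -> sumdiv N A = B N) ->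
  (forall N, (0 < N)%N -> beta N = sumdiv N alpha) -> (0 < n)%N ->
  sumdiv n (fun m => wt r s m * A m) - sumdiv n (fun m => wt r s m * alpha m)
  = sumdiv n (fun k => gfun r s k (n %/ k) * (B k - beta k)).
Proof.
move=> sumA sum_alpha n_gt0.
have sum_diff N : (0 < N)%N -> sumdiv N (fun m => A m - alpha m) = B N - beta N.
  by move=> N_gt0; rewrite /sumdiv sumR_sub -!/(sumdiv _ _) sumA // sum_alpha.
rewrite /sumdiv -sumR_sub -/(sumdiv _ _) -[RHS](sumdiv_wt_gfun r s sum_diff n_gt0).
by apply: eq_sumdiv => // m _; ring.
Qed.

Theorem lemma2p2 (A B : nat -> R) (r s : R) :
  (forall n : nat, (0 < n)%N -> sumdiv n A = B n) ->
  s <= Rmin 0 r ->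
  forall n : nat, (0 < n)%N ->
    sumdiv n (fun m => wt r s m * A m)
      = sumdiv n (fun k => gfun r s k (n %/ k)%N * B k)
    /\
    (forall alpha beta : nat -> R,
       (forall N : nat, (0 < N)%N -> 0 < alpha N) ->
       (forall N : nat, (0 < N)%N -> 0 < beta N) ->
       (forall N : nat, (0 < N)%N -> beta N = sumdiv N alpha) ->
       (forall k : nat, (0 < k)%N -> (k %| n)%N -> beta k <= B k) ->
       sumdiv n (fun m => wt r s m * A m)
         >= sumdiv n (fun m => wt r s m * alpha m)
       /\
       (sumdiv n (fun m => wt r s m * A m)
          = sumdiv n (fun m => wt r s m * alpha m)
        <->
        (forall k : nat, (0 < k)%N -> (k %| n)%N ->
           gfun r s k (n %/ k)%N <> 0 -> B k = beta k))).
Proof.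
move=> sumA s_le n n_gt0; split; first exact: sumdiv_wt_gfun.
move=> alpha beta _ _ sum_alpha beta_le.
pose T k := gfun r s k (n %/ k) * (B k - beta k).
have gap : sumdiv n (fun m => wt r s m * A m) - sumdiv n (fun m => wt r s m * alpha m)
           = sumdiv n T := sumdiv_wt_sub r s sumA sum_alpha n_gt0.
have T_ge0 k : k \in divisors n -> 0 <= T k.
  rewrite -dvdn_divisors // => k_n; have k_gt0 := dvdn_gt0 n_gt0 k_n.
  apply: Rmult_le_pos; first by apply: gfun_ge0; rewrite // divn_gt0 // dvdn_leq.
  by have := beta_le k k_gt0 k_n; lra.
have sumT_ge0 : 0 <= sumdiv n T by rewrite /sumdiv big_seq; apply: sumR_ge0.
split; first lra.
apply: (iff_trans (_ : _ <-> sumdiv n T = 0)); first by split; lra.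
apply: (iff_trans (psumR_eq0 T_ge0)); split=> [T0 k k_gt0 k_n g_neq0 | eqB k].
  have := T0 k; rewrite -dvdn_divisors // => /(_ k_n) /Rmult_integral[] //; lra.
rewrite -dvdn_divisors // /T => k_n; have k_gt0 := dvdn_gt0 n_gt0 k_n.
have [-> | g_neq0] := Req_dec (gfun r s k (n %/ k)) 0; first by ring.
by rewrite (eqB k k_gt0 k_n g_neq0); ring.
Qed.
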